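(* Let $\gamma$ be a smooth curve in the affine plane with strictly positive equi-affine curvature $\kappa$, and let $\mathscr{P}_\gamma$ be its osculating parabolic congruence, a curve in $(\mathrm{SL}(2),g)$. Then the full-affine arc-length of $\gamma$, $\int\sqrt{\kappa}\,\mathrm{d}s$, equals the pseudo-Riemannian arc-length $\int\sqrt{|g(\dot{\mathscr{P}}_\gamma,\dot{\mathscr{P}}_\gamma)|}\,\mathrm{d}t$ of $\mathscr{P}_\gamma$ (over corresponding parameter intervals).
   Context: The affine plane is $\mathbb{R}^2$ with area form $|u,v|=\det(u,v)$. For a nondegenerate curve parametrised by equi-affine arc-length $s$ (i.e. $|\gamma',\gamma''|=1$), $T=\gamma'$, $N=\gamma''$, and the equi-affine curvature $\kappa$ is defined by $\gamma'''=-\kappa\gamma'$; the full-affine arc-length element is $\mathrm{d}s_{\mathbf F}=\sqrt{\kappa}\,\mathrm{d}s$ (for $\kappa>0$). The osculating parabola of $\gamma$ at $\gamma(s_0)$ is the parabola $u\mapsto\gamma(s_0)+u\,T(s_0)+\tfrac{u^2}{2}N(s_0)$. A pointed parabola is a parabola together with a distinguished point on it; any two pointed parabolas are related by a unique orientation-preserving equi-affine transformation $p\mapsto Lp+b$ ($L\in\mathrm{SL}(2)$) mapping one to the other and distinguished point to distinguished point. Fix a standard pointed parabola. For an arbitrarily (regularly) parametrised curve $t\mapsto\gamma(t)$, let $\Phi(t)$ be the orientation-preserving equi-affine transformation carrying the standard pointed parabola to the osculating parabola of $\gamma$ at $\gamma(t)$ with distinguished point $\gamma(t)$; the osculating parabolic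 congruence is $\mathscr{P}_\gamma(t)=$ the linear part of $\Phi(t)$, an element of $\mathrm{SL}(2)$. The group $\mathrm{SL}(2)\subset\mathbb{R}^{2\times2}$ carries the bi-invariant Lorentzian metric $g(v_P,v_P)=-\det(v_P)$ for $v_P\in T_P\mathrm{SL}(2)\subseteq\mathbb{R}^{2\times2}$. *)

From Stdlib Require Import Reals.
From Coquelicot Require Import Coquelicot.
Open Scope R_scope.

Definition det2 (u v : R * R) : R := fst u * snd v - snd u * fst v.
Definition vadd (u v : R * R) : R * R := (fst u + fst v, snd u + snd v).

Record Mat2 := mkMat2 { m11 : R; m12 : R; m21 : R; m22 : R }.
Definition detM (M : Mat2) : R := m11 M * m22 M - m12 M * m21 M.
Definition mapply (M : Mat2) (p : R * R) : R * R :=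
  (m11 M * fst p + m12 M * snd p, m21 M * fst p + m22 M * snd p).

Definition affine (L : Mat2) (b : R * R) (p : R * R) : R * R := vadd (mapply L p) b.

Definition smooth_on (f : R -> R) (lo hi : R) : Prop :=
  forall (n : nat) (s : R), lo <= s <= hi -> ex_derive (Derive_n f n) s.

(* A (pointed) parabola given as an affine image of the model parabola
   u |-> (u, u^2/2) under p |-> M0 p + b0 (M0 invertible), distinguished point b0. *)
Definition parabola_set (M0 : Mat2) (b0 : R * R) (p : R * R) : Prop :=
  exists u : R, p = affine M0 b0 (u, u ^ 2 / 2).

(* Osculating parabola of the equi-affinely parametrised curve c = (x, y) at c(s0):
   u |-> c(s0) + u T(s0) + u^2/2 N(s0), with T = c', N = c''. *)
Definition osc_parabola_set (x y : R -> R) (s0 : R) (p : R * R) : Prop :=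
  exists u : R,
    p = (x s0 + u * Derive_n x 1 s0 + u ^ 2 / 2 * Derive_n x 2 s0,
         y s0 + u * Derive_n y 1 s0 + u ^ 2 / 2 * Derive_n y 2 s0).

Definition carries_pointed (L : Mat2) (b : R * R)
    (S1 : R * R -> Prop) (p1 : R * R) (S2 : R * R -> Prop) (p2 : R * R) : Prop :=
  (forall q, S2 q <-> exists p, S1 p /\ q = affine L b p) /\ affine L b p1 = p2.

(* L is the linear part of the orientation-preserving equi-affine transformation
   carrying the standard pointed parabola (parabola_set M0 b0, b0) to the osculating
   parabola of c = (x,y) at c(s0) with distinguished point pt. *)
Definition is_osc_congruence (M0 : Mat2) (b0 : R * R) (x y : R -> R) (s0 : R)
    (pt : R * R) (L : Mat2) : Prop :=
  detM L = 1 /\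
  exists b : R * R,
    carries_pointed L b (parabola_set M0 b0) b0 (osc_parabola_set x y s0) pt.

Definition dMat (P : R -> Mat2) (t : R) : Mat2 :=
  mkMat2 (Derive (fun u => m11 (P u)) t) (Derive (fun u => m12 (P u)) t)
         (Derive (fun u => m21 (P u)) t) (Derive (fun u => m22 (P u)) t).

(* The bi-invariant Lorentzian metric on SL(2): g(v,v) = - det v. *)
Definition g_metric (v : Mat2) : R := - detM v.

(* Along s = sigma t the osculating parabolic congruence is
   P = [alpha T | alpha^2 N] M0^-1, with alpha the real cube root of det M0: the linear
   part P M0 of the affine map taking the model parabola (u, u^2/2) onto the osculating
   parabola v T + v^2/2 N must have columns alpha T and alpha^2 N.  Differentiating with
   N' = -kappa T gives det P' = sigma'^2 alpha^3 det (N, N') / det M0 = sigma'^2 kappa,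
   so sqrt |g(P', P')| = |sigma'| sqrt (kappa o sigma), and the two arc-lengths agree by
   the substitution s = sigma t. *)

From Stdlib Require Import Reals Lra Psatz.
From Coquelicot Require Import Coquelicot.
Open Scope R_scope.

Definition mmul (A B : Mat2) : Mat2 :=
  mkMat2 (m11 A * m11 B + m12 A * m21 B) (m11 A * m12 B + m12 A * m22 B)
         (m21 A * m11 B + m22 A * m21 B) (m21 A * m12 B + m22 A * m22 B).

Definition minv (M : Mat2) : Mat2 :=
  mkMat2 (m22 M / detM M) (- m12 M / detM M) (- m21 M / detM M) (m11 M / detM M).

Definition mscal (c : R) (M : Mat2) : Mat2 :=
  mkMat2 (c * m11 M) (c * m12 M) (c * m21 M) (c * m22 M).

Lemma detM_mmul (A B : Mat2) : detM (mmul A B) = detM A * detM B.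
Proof. unfold detM, mmul; simpl; ring. Qed.

Lemma detM_minv (M : Mat2) : detM M <> 0 -> detM (minv M) = / detM M.
Proof.
  intro HM; unfold minv; unfold detM at 1; simpl.
  field_simplify_eq; [unfold detM; ring | exact HM].
Qed.

Lemma detM_mscal (c : R) (M : Mat2) : detM (mscal c M) = c ^ 2 * detM M.
Proof. unfold detM, mscal; simpl; ring. Qed.

Lemma mmul_minv_r_eq (L M F : Mat2) :
  detM M <> 0 -> mmul L M = F -> L = mmul F (minv M).
Proof.
  intros HM <-; destruct L, M; unfold minv, mmul, detM in *; simpl in *.
  f_equal; field; exact HM.
Qed.

Lemma parabola_polynomial_identity (al be ga de : R) :
  (forall u, be * u + de * (u ^ 2 / 2) = (al * u + ga * (u ^ 2 / 2)) ^ 2 / 2) ->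
  ga = 0 /\ be = 0 /\ de = al ^ 2.
Proof.
  intro E.
  pose proof (E 1) as E1; pose proof (E (-1)) as E2.
  pose proof (E 2) as E3; pose proof (E (-2)) as E4.
  assert (Hga : ga = 0) by nra.
  subst ga; split; [reflexivity | split]; nra.
Qed.

Lemma linear_map_between_parabolas (A : Mat2) (T1 T2 N1 N2 : R) :
  T1 * N2 - T2 * N1 = 1 ->
  (forall u, exists v, mapply A (u, u ^ 2 / 2) =
     (v * T1 + v ^ 2 / 2 * N1, v * T2 + v ^ 2 / 2 * N2)) ->
  exists al, A = mkMat2 (al * T1) (al ^ 2 * N1) (al * T2) (al ^ 2 * N2).
Proof.
  intros HD HA; destruct A as [a11 a12 a21 a22].
  unfold mapply in HA; cbn [fst snd m11 m12 m21 m22] in HA.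
  (* coordinates of the columns of A in the basis (T, N) *)
  set (al := a11 * N2 - a21 * N1); set (ga := a12 * N2 - a22 * N1).
  set (be := T1 * a21 - T2 * a11); set (de := T1 * a22 - T2 * a12).
  assert (Hpoly : forall u, be * u + de * (u ^ 2 / 2) = (al * u + ga * (u ^ 2 / 2)) ^ 2 / 2).
  { intro u; destruct (HA u) as [v Hv].
    pose proof (f_equal fst Hv) as H1; pose proof (f_equal snd Hv) as H2; cbn [fst snd] in H1, H2.
    assert (Hv1 : al * u + ga * (u ^ 2 / 2) = v).
    { transitivity ((a11 * u + a12 * (u ^ 2 / 2)) * N2 - (a21 * u + a22 * (u ^ 2 / 2)) * N1);
        [unfold al, ga; ring |].
      rewrite H1, H2; transitivity (v * (T1 * N2 - T2 * N1)); [ring | rewrite HD; ring]. }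
    rewrite Hv1.
    transitivity (T1 * (a21 * u + a22 * (u ^ 2 / 2)) - T2 * (a11 * u + a12 * (u ^ 2 / 2)));
      [unfold be, de; ring |].
    rewrite H1, H2; transitivity (v ^ 2 / 2 * (T1 * N2 - T2 * N1)); [ring | rewrite HD; ring]. }
  destruct (parabola_polynomial_identity al be ga de Hpoly) as (Hga & Hbe & Hde).
  exists al; f_equal.
  all: match goal with
       |- ?w = _ => replace w with (w * (T1 * N2 - T2 * N1)) by (rewrite HD; ring)
       end.
  - transitivity (al * T1 + be * N1); [unfold al, be; ring | rewrite Hbe; ring].
  - transitivity (ga * T1 + de * N1); [unfold ga, de; ring | rewrite Hga, Hde; ring].
  - transitivity (al * T2 + be * N2); [unfold al, be; ring | rewrite Hbe; ring].
  - transitivity (ga * T2 + de * N2); [unfold ga, de; ring | rewrite Hga, Hde; ring].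
Qed.

Lemma pow3_inj (u v : R) : u ^ 3 = v ^ 3 -> u = v.
Proof.
  intro H.
  assert (H0 : (u - v) * ((2 * u + v) ^ 2 + 3 * v ^ 2) = 0).
  { transitivity (4 * (u ^ 3 - v ^ 3)); [ring | rewrite H; ring]. }
  destruct (Rmult_integral _ _ H0) as [H1 | H1]; [lra |].
  pose proof (pow2_ge_0 (2 * u + v)); pose proof (pow2_ge_0 v).
  assert (v = 0) by nra; subst v; nra.
Qed.

Lemma affine_comp (L M : Mat2) (b c p : R * R) :
  affine L b (affine M c p) = vadd (mapply (mmul L M) p) (affine L b c).
Proof.
  destruct p, b, c; unfold affine, vadd, mapply, mmul; cbn; f_equal; ring.
Qed.

Definition osc_frame (al : R) (x y : R -> R) (s : R) : Mat2 :=
  mkMat2 (al * Derive_n x 1 s) (al ^ 2 * Derive_n x 2 s)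
         (al * Derive_n y 1 s) (al ^ 2 * Derive_n y 2 s).

Lemma osc_congruence_frame (M0 : Mat2) (b0 : R * R) (x y : R -> R) (s0 : R) (L : Mat2) :
  detM M0 <> 0 ->
  det2 (Derive_n x 1 s0, Derive_n y 1 s0) (Derive_n x 2 s0, Derive_n y 2 s0) = 1 ->
  is_osc_congruence M0 b0 x y s0 (x s0, y s0) L ->
  exists al, al ^ 3 = detM M0 /\ L = mmul (osc_frame al x y s0) (minv M0).
Proof.
  intros HM0 HD [HL [b [Hcarry Hpt]]]; unfold det2 in HD; cbn [fst snd] in HD.
  destruct (linear_map_between_parabolas (mmul L M0) _ _ _ _ HD) as [al Hal].
  - intro u.
    destruct (proj2 (Hcarry (affine L b (affine M0 b0 (u, u ^ 2 / 2))))) as [v Hv].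
    { exists (affine M0 b0 (u, u ^ 2 / 2)); split; [exists u |]; reflexivity. }
    exists v; rewrite affine_comp, Hpt in Hv; revert Hv.
    destruct (mapply (mmul L M0) (u, u ^ 2 / 2)) as [w1 w2]; unfold vadd; cbn.
    intro Hv; pose proof (f_equal fst Hv); pose proof (f_equal snd Hv); cbn in *.
    f_equal; lra.
  - exists al; split.
    + rewrite <- (Rmult_1_l (detM M0)), <- HL, <- detM_mmul, Hal.
      unfold detM; cbn [m11 m12 m21 m22].
      transitivity
        (al ^ 3 * (Derive_n x 1 s0 * Derive_n y 2 s0 - Derive_n y 1 s0 * Derive_n x 2 s0));
        [rewrite HD |]; ring.
    + apply mmul_minv_r_eq; assumption.
Qed.

Lemma osc_congruence_eq_frame (M0 : Mat2) (b0 : R * R) (x y : R -> R) (s0 : R) (L : Mat2) (al : R) :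
  detM M0 <> 0 -> al ^ 3 = detM M0 ->
  det2 (Derive_n x 1 s0, Derive_n y 1 s0) (Derive_n x 2 s0, Derive_n y 2 s0) = 1 ->
  is_osc_congruence M0 b0 x y s0 (x s0, y s0) L ->
  L = mmul (osc_frame al x y s0) (minv M0).
Proof.
  intros HM0 Hal HD HL.
  destruct (osc_congruence_frame M0 b0 x y s0 L HM0 HD HL) as [al' [Hal' ->]].
  replace al' with al by (apply pow3_inj; congruence); reflexivity.
Qed.

Lemma osc_congruence_family (M0 : Mat2) (b0 : R * R) (x y sigma : R -> R) (P : R -> Mat2)
    (a b : R) :
  a <= b -> detM M0 <> 0 ->
  (forall t, a <= t <= b -> det2 (Derive_n x 1 (sigma t), Derive_n y 1 (sigma t))
                                 (Derive_n x 2 (sigma t), Derive_n y 2 (sigma t)) = 1) ->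
  (forall t, a <= t <= b ->
     is_osc_congruence M0 b0 x y (sigma t) (x (sigma t), y (sigma t)) (P t)) ->
  exists al, al ^ 3 = detM M0 /\
    forall t, a <= t <= b -> P t = mmul (osc_frame al x y (sigma t)) (minv M0).
Proof.
  intros Hab HM0 HD HP.
  destruct (osc_congruence_frame M0 b0 x y (sigma a) (P a) HM0) as [al [Hal _]];
    [apply HD | apply HP | exists al; split; [exact Hal |]]; try lra.
  intros t Ht; apply (osc_congruence_eq_frame M0 b0); auto.
Qed.

(* [kappa] is only given pointwise; [det (N, N')] agrees with it wherever the Frenet
   equations hold and is continuous. *)
Definition curvature_det (x y : R -> R) (s : R) : R :=
  det2 (Derive_n x 2 s, Derive_n y 2 s) (Derive_n x 3 s, Derive_n y 3 s).

Lemma equiaffine_curvature_det2 (X1 Y1 X2 Y2 X3 Y3 k : R) :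
  det2 (X1, Y1) (X2, Y2) = 1 -> X3 = - k * X1 -> Y3 = - k * Y1 ->
  k = det2 (X2, Y2) (X3, Y3).
Proof.
  unfold det2; cbn; intros HD -> ->.
  transitivity (k * (X1 * Y2 - Y1 * X2)); [rewrite HD |]; ring.
Qed.

Lemma continuous_curvature_det (x y : R -> R) (lo hi s : R) :
  smooth_on x lo hi -> smooth_on y lo hi -> lo <= s <= hi ->
  continuous (curvature_det x y) s.
Proof.
  intros Hx Hy Hs; unfold curvature_det, det2; cbn [fst snd].
  assert (Hc : forall f n, smooth_on f lo hi -> continuous (Derive_n f n) s)
    by (intros f n Hf; apply (ex_derive_continuous (V := R_NormedModule)), Hf, Hs).
  apply (continuous_minus (V := R_NormedModule));
    apply (continuous_mult (K := R_AbsRing)); apply Hc; assumption.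
Qed.

Definition osc_frame_deriv (al : R) (x y : R -> R) (s : R) : Mat2 :=
  mkMat2 (al * Derive_n x 2 s) (al ^ 2 * Derive_n x 3 s)
         (al * Derive_n y 2 s) (al ^ 2 * Derive_n y 3 s).

Lemma detM_osc_frame_deriv (al : R) (x y : R -> R) (s : R) :
  detM (osc_frame_deriv al x y s) = al ^ 3 * curvature_det x y s.
Proof. unfold detM, curvature_det, det2, osc_frame_deriv; cbn; ring. Qed.

Lemma dMat_ext_loc (P Q : R -> Mat2) (t : R) :
  locally t (fun u => P u = Q u) -> dMat P t = dMat Q t.
Proof.
  intro HPQ; unfold dMat; f_equal; apply Derive_ext_loc;
    revert HPQ; apply filter_imp; intros u ->; reflexivity.
Qed.

Lemma dMat_mmul_r (F : R -> Mat2) (C : Mat2) (t : R) :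
  ex_derive (fun u => m11 (F u)) t -> ex_derive (fun u => m12 (F u)) t ->
  ex_derive (fun u => m21 (F u)) t -> ex_derive (fun u => m22 (F u)) t ->
  dMat (fun u => mmul (F u) C) t = mmul (dMat F t) C.
Proof.
  intros H11 H12 H21 H22.
  assert (Hlin : forall (f g : R -> R) (c d : R), ex_derive f t -> ex_derive g t ->
            Derive (fun u => f u * c + g u * d) t = Derive f t * c + Derive g t * d).
  { intros f g c d Hf Hg; apply is_derive_unique, (is_derive_plus (fun u => f u * c));
      apply (is_derive_scal_l (V := R_NormedModule)), Derive_correct; assumption. }
  unfold dMat, mmul; cbn; f_equal; apply Hlin; assumption.
Qed.

Lemma is_derive_scal_Derive_n_comp (c : R) (f sigma : R -> R) (n : nat) (t : R) :
  ex_derive sigma t -> ex_derive (Derive_n f n) (sigma t) ->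
  is_derive (fun u => c * Derive_n f n (sigma u)) t
    (c * (Derive sigma t * Derive_n f (S n) (sigma t))).
Proof.
  intros Hs Hf; apply is_derive_scal, (is_derive_comp (Derive_n f n) sigma);
    apply Derive_correct; assumption.
Qed.

Lemma sqrt_Rabs_opp_sqr_mul (c k : R) :
  0 <= k -> sqrt (Rabs (- (c ^ 2 * k))) = Rabs c * sqrt k.
Proof.
  intro Hk.
  rewrite Rabs_Ropp, Rabs_pos_eq by (apply Rmult_le_pos; [apply pow2_ge_0 | exact Hk]).
  rewrite sqrt_mult by (apply pow2_ge_0 || exact Hk).
  rewrite <- Rsqr_pow2, sqrt_Rsqr_abs; reflexivity.
Qed.

Section FrameAlongReparametrisation.

Variables (al : R) (x y sigma : R -> R) (t : R).
Hypothesis Hsigma : ex_derive sigma t.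
Hypotheses (Hx1 : ex_derive (Derive_n x 1) (sigma t)) (Hx2 : ex_derive (Derive_n x 2) (sigma t)).
Hypotheses (Hy1 : ex_derive (Derive_n y 1) (sigma t)) (Hy2 : ex_derive (Derive_n y 2) (sigma t)).

Lemma dMat_osc_frame_comp :
  dMat (fun u => osc_frame al x y (sigma u)) t =
  mscal (Derive sigma t) (osc_frame_deriv al x y (sigma t)).
Proof.
  unfold dMat, mscal, osc_frame, osc_frame_deriv; cbn [m11 m12 m21 m22]; f_equal;
    (erewrite is_derive_unique; [| apply is_derive_scal_Derive_n_comp; eassumption]); ring.
Qed.

Lemma detM_dMat_osc_frame (P : R -> Mat2) (M0 : Mat2) :
  detM M0 <> 0 -> al ^ 3 = detM M0 ->
  locally t (fun u => P u = mmul (osc_frame al x y (sigma u)) (minv M0)) ->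
  detM (dMat P t) = Derive sigma t ^ 2 * curvature_det x y (sigma t).
Proof.
  intros HM0 Hal HP.
  rewrite (dMat_ext_loc _ _ _ HP), dMat_mmul_r, dMat_osc_frame_comp, detM_mmul, detM_mscal,
    detM_osc_frame_deriv, detM_minv by
    (assumption || (eexists; apply is_derive_scal_Derive_n_comp; assumption)).
  rewrite Hal; field; exact HM0.
Qed.

Lemma sqrt_g_metric_dMat_osc_frame (P : R -> Mat2) (M0 : Mat2) :
  detM M0 <> 0 -> al ^ 3 = detM M0 ->
  locally t (fun u => P u = mmul (osc_frame al x y (sigma u)) (minv M0)) ->
  0 <= curvature_det x y (sigma t) ->
  sqrt (Rabs (g_metric (dMat P t))) = Rabs (Derive sigma t) * sqrt (curvature_det x y (sigma t)).
Proof.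
  intros HM0 Hal HP Hcurv.
  unfold g_metric; rewrite (detM_dMat_osc_frame P M0 HM0 Hal HP).
  exact (sqrt_Rabs_opp_sqr_mul _ _ Hcurv).
Qed.

End FrameAlongReparametrisation.

Lemma continuous_nonzero_sign (f : R -> R) (a b : R) :
  (forall t, a <= t <= b -> continuous f t) ->
  (forall t, a <= t <= b -> f t <> 0) ->
  (forall t, a <= t <= b -> 0 < f t) \/ (forall t, a <= t <= b -> f t < 0).
Proof.
  intros Hc Hnz.
  destruct (Rlt_or_le b a) as [Hba | Hab]; [left; intros; lra |].
  assert (Ha : a <= a <= b) by lra.
  assert (Hsame : forall t, a <= t <= b -> 0 < f a * f t).
  { intros t Ht.
    assert (Hprod : forall u, a <= u <= b -> f a * f u <> 0).
    { intros u Hu; apply Rmult_integral_contrapositive; split; auto. }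
    destruct (Rlt_or_le 0 (f a * f t)) as [Hpos | Hle]; [exact Hpos | exfalso].
    assert (Hneg : f a * f t < 0) by (pose proof (Hprod t Ht); lra).
    assert (Hta : a < t) by (destruct (Req_dec t a) as [-> |]; nra).
    destruct (Ranalysis5.IVT_interv (fun u => - (f a * f u)) a t) as [z [Hz Hfz]].
    - intros u Hu; apply continuity_pt_filterlim.
      apply (continuous_opp (V := R_NormedModule) (fun u => f a * f u)),
            (continuous_scal_r (f a) f), Hc; lra.
    - exact Hta.
    - nra.
    - lra.
    - apply (Hprod z); lra. }
  destruct (Rlt_or_le 0 (f a)) as [Hfa | Hfa]; [left | right]; intros t Ht;
    pose proof (Hsame t Ht); [nra |].
  pose proof (Hnz a Ha); assert (f a < 0) by lra; nra.
Qed.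

Lemma is_derive_pos_between (g dg : R -> R) (a b : R) :
  (forall t, a <= t <= b -> is_derive g t (dg t)) ->
  (forall t, a <= t <= b -> 0 < dg t) ->
  forall t, a <= t <= b -> g a <= g t <= g b.
Proof.
  intros Hd Hpos t Ht.
  assert (Hincr : forall u v, a <= u -> u < v -> v <= b -> g u < g v).
  { intros u v Hu Huv Hv; apply (incr_function_le g a b dg); cbn; try assumption;
      intros w Hwa Hwb; [apply Hd | apply Hpos]; split; assumption. }
  split.
  - destruct (Rle_lt_or_eq_dec a t (proj1 Ht)) as [Hat | <-]; [apply Rlt_le, Hincr; lra | lra].
  - destruct (Rle_lt_or_eq_dec t b (proj2 Ht)) as [Htb | ->]; [apply Rlt_le, Hincr; lra | lra].
Qed.

Lemma is_derive_neg_between (g dg : R -> R) (a b : R) :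
  (forall t, a <= t <= b -> is_derive g t (dg t)) ->
  (forall t, a <= t <= b -> dg t < 0) ->
  forall t, a <= t <= b -> g b <= g t <= g a.
Proof.
  intros Hd Hneg t Ht.
  assert (Hd' : forall u, a <= u <= b -> is_derive (fun v => - g v) u (- dg u)).
  { intros u Hu; apply (is_derive_opp g), Hd, Hu. }
  assert (Hpos : forall u, a <= u <= b -> 0 < - dg u).
  { intros u Hu; specialize (Hneg u Hu); lra. }
  pose proof (is_derive_pos_between _ _ a b Hd' Hpos t Ht); lra.
Qed.

Lemma is_derive_sign_range (g dg : R -> R) (a b : R) :
  a <= b ->
  (forall t, a <= t <= b -> is_derive g t (dg t)) ->
  (forall t, a <= t <= b -> 0 < dg t) \/ (forall t, a <= t <= b -> dg t < 0) ->
  forall t, a <= t <= b -> Rmin (g a) (g b) <= g t <= Rmax (g a) (g b).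
Proof.
  intros Hab Hd [Hpos | Hneg] t Ht.
  - pose proof (is_derive_pos_between g dg a b Hd Hpos t Ht).
    pose proof (is_derive_pos_between g dg a b Hd Hpos b ltac:(lra)).
    rewrite Rmin_left, Rmax_right; lra.
  - pose proof (is_derive_neg_between g dg a b Hd Hneg t Ht).
    pose proof (is_derive_neg_between g dg a b Hd Hneg b ltac:(lra)).
    rewrite Rmin_right, Rmax_left; lra.
Qed.

Lemma RInt_comp_Rabs (h g : R -> R) (a b : R) :
  a <= b ->
  (forall t, a <= t <= b -> is_derive g t (Derive g t) /\ continuous (Derive g) t) ->
  (forall t, a <= t <= b -> 0 < Derive g t) \/ (forall t, a <= t <= b -> Derive g t < 0) ->
  (forall s, Rmin (g a) (g b) <= s <= Rmax (g a) (g b) -> continuous h s) ->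
  RInt h (Rmin (g a) (g b)) (Rmax (g a) (g b)) =
  RInt (fun t => Rabs (Derive g t) * h (g t)) a b.
Proof.
  intros Hab Hg Hsign Hh.
  assert (Hd : forall t, a <= t <= b -> is_derive g t (Derive g t)) by apply Hg.
  assert (Hrange := is_derive_sign_range g (Derive g) a b Hab Hd Hsign).
  assert (Hcomp : is_RInt (fun t => Derive g t * h (g t)) a b (RInt h (g a) (g b))).
  { apply (is_RInt_comp h g); rewrite Rmin_left, Rmax_right by exact Hab; intros t Ht.
    - apply Hh, Hrange, Ht.
    - apply Hg, Ht. }
  destruct Hsign as [Hpos | Hneg].
  - pose proof (is_derive_pos_between g _ a b Hd Hpos b ltac:(lra)).
    rewrite Rmin_left, Rmax_right by lra.
    symmetry; apply is_RInt_unique; revert Hcomp; apply is_RInt_ext.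
    rewrite Rmin_left, Rmax_right by exact Hab; intros t Ht.
    rewrite Rabs_pos_eq by (apply Rlt_le, Hpos; lra); reflexivity.
  - pose proof (is_derive_neg_between g _ a b Hd Hneg b ltac:(lra)).
    rewrite Rmin_right, Rmax_left by lra.
    rewrite <- opp_RInt_swap by (apply ex_RInt_continuous; intros; apply Hh; assumption).
    symmetry; apply is_RInt_unique; apply is_RInt_opp in Hcomp; revert Hcomp; apply is_RInt_ext.
    rewrite Rmin_left, Rmax_right by exact Hab; intros t Ht.
    rewrite Rabs_left by (apply Hneg; lra); unfold opp; cbn; ring.
Qed.

Lemma smooth_on_is_derive_continuous (f : R -> R) (a b : R) :
  smooth_on f a b ->
  forall t, a <= t <= b -> is_derive f t (Derive f t) /\ continuous (Derive f) t.
Proof.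
  intros Hf t Ht; split;
    [apply Derive_correct, (Hf 0%nat t Ht)
    | apply (ex_derive_continuous (V := R_NormedModule)), (Hf 1%nat t Ht)].
Qed.

Theorem mainTheorem6
  (x y : R -> R)            (* equi-affine arc-length parametrisation c(s) = (x s, y s) *)
  (kappa : R -> R)          (* equi-affine curvature *)
  (sigma : R -> R)          (* t |-> s = sigma t, the equi-affine arc-length parameter *)
  (gamma : R -> R * R)      (* the curve in its arbitrary regular parameter t *)
  (P : R -> Mat2)           (* osculating parabolic congruence *)
  (M0 : Mat2) (b0 : R * R)  (* the fixed standard pointed parabola *)
  (a b : R) :
  a < b ->
  detM M0 <> 0 ->
  smooth_on sigma a b ->
  (forall t, a <= t <= b -> Derive sigma t <> 0) ->
  smooth_on x (Rmin (sigma a) (sigma b)) (Rmax (sigma a) (sigma b)) ->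
  smooth_on y (Rmin (sigma a) (sigma b)) (Rmax (sigma a) (sigma b)) ->
  (forall s, Rmin (sigma a) (sigma b) <= s <= Rmax (sigma a) (sigma b) ->
     det2 (Derive_n x 1 s, Derive_n y 1 s) (Derive_n x 2 s, Derive_n y 2 s) = 1) ->
  (forall s, Rmin (sigma a) (sigma b) <= s <= Rmax (sigma a) (sigma b) ->
     Derive_n x 3 s = - kappa s * Derive_n x 1 s /\
     Derive_n y 3 s = - kappa s * Derive_n y 1 s) ->
  (forall s, Rmin (sigma a) (sigma b) <= s <= Rmax (sigma a) (sigma b) ->
     0 < kappa s) ->
  (forall t, a <= t <= b -> gamma t = (x (sigma t), y (sigma t))) ->
  (forall t, a <= t <= b -> is_osc_congruence M0 b0 x y (sigma t) (gamma t) (P t)) ->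
  RInt (fun s => sqrt (kappa s)) (Rmin (sigma a) (sigma b)) (Rmax (sigma a) (sigma b))
  = RInt (fun t => sqrt (Rabs (g_metric (dMat P t)))) a b.
Proof.
  intros Hab HM0 Hsigma Hsigma0 Hx Hy HD Hk Hkpos Hgamma Hcong.
  set (lo := Rmin (sigma a) (sigma b)) in *; set (hi := Rmax (sigma a) (sigma b)) in *.
  assert (Hsd := smooth_on_is_derive_continuous sigma a b Hsigma).
  assert (Hsign := continuous_nonzero_sign _ a b (fun t Ht => proj2 (Hsd t Ht)) Hsigma0).
  assert (Hrange := is_derive_sign_range sigma _ a b (Rlt_le _ _ Hab)
                      (fun t Ht => proj1 (Hsd t Ht)) Hsign).
  destruct (osc_congruence_family M0 b0 x y sigma P a b) as [al [Hal HP]].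
  { lra. }
  { exact HM0. }
  { intros t Ht; apply HD, Hrange, Ht. }
  { intros t Ht; rewrite <- Hgamma by exact Ht; apply Hcong, Ht. }
  assert (Hkappa : forall s, lo <= s <= hi -> kappa s = curvature_det x y s).
  { intros s Hs; destruct (Hk s Hs) as [Hk1 Hk2].
    exact (equiaffine_curvature_det2 _ _ _ _ _ _ _ (HD s Hs) Hk1 Hk2). }
  assert (Hlohi : lo <= hi) by apply Rmin_Rmax.
  rewrite (RInt_ext _ (fun s => sqrt (curvature_det x y s))).
  2: { rewrite Rmin_left, Rmax_right by exact Hlohi.
       intros s Hs; rewrite Hkappa; [reflexivity | lra]. }
  rewrite (RInt_comp_Rabs _ sigma a b (Rlt_le _ _ Hab) Hsd Hsign).
  2: { intros s Hs; apply continuous_sqrt_comp, (continuous_curvature_det x y lo hi); assumption. }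
  apply RInt_ext; rewrite Rmin_left, Rmax_right by lra; intros t Ht.
  assert (Ht' : a <= t <= b) by lra.
  assert (Hst := Hrange t Ht').
  symmetry; apply (sqrt_g_metric_dMat_osc_frame al x y sigma t (Hsigma 0%nat t Ht')
    (Hx 1%nat _ Hst) (Hx 2%nat _ Hst) (Hy 1%nat _ Hst) (Hy 2%nat _ Hst) P M0 HM0 Hal).
  - apply (locally_interval _ t a b); cbn; try lra.
    intros u Hua Hub; apply HP; lra.
  - rewrite <- (Hkappa _ Hst); apply Rlt_le, Hkpos, Hst.
Qed.
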